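(* If the bornological \(V\)-module \(M\) is torsionfree, then so is \(M'\).
   Context: Let \(V\) be a complete discrete valuation ring with uniformiser \(\pi\). A bornology on a set is a collection of subsets (called bounded) containing all finite subsets and closed under finite unions and under taking subsets. A bornological \(V\)-module is a \(V\)-module \(M\) with a bornology such that every bounded subset is contained in a bounded \(V\)-submodule. \(M\) is (bornologically) torsionfree if it is torsionfree as a \(V\)-module and \(\pi^{-1}S=\{x\in M:\pi x\in S\}\) is bounded for every bounded \(S\subseteq M\). A subset \(S\subseteq M\) is compactoid if there is a bounded \(V\)-submodule \(T\subseteq M\) with \(S\subseteq T\) such that for every \(n\in\mathbb N\) there is a finite set \(F_n\subseteq T\) with \(S\subseteq VF_n+\pi^nT\). \(M'\) denotes \(M\) with the bornology consisting of the compactoid subsets. *)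

From HB Require Import structures.
From Stdlib Require List.
From mathcomp Require Import all_boot all_order all_algebra.
Set Implicit Arguments. Unset Strict Implicit. Unset Printing Implicit Defensive.
Import GRing.Theory.
Local Open Scope ring_scope.

Definition subset_of (T : Type) (A C : T -> Prop) : Prop := forall x, A x -> C x.

Definition finite_subset (T : Type) (A : T -> Prop) : Prop :=
  exists s : seq T, forall x, A x -> List.In x s.

Definition pi_dvd (V : idomainType) (pi : V) (n : nat) (a : V) : Prop :=
  exists b : V, a = pi ^+ n * b.

Definition dvr_uniformiser (V : idomainType) (pi : V) : Prop :=
  [/\ pi != 0, pi \isn't a GRing.unit &
      forall a : V, a != 0 -> exists (u : V) (n : nat), u \is a GRing.unit /\ a = u * pi ^+ n].

Definition pi_adically_complete (V : idomainType) (pi : V) : Prop :=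
  forall x : nat -> V, (forall n, pi_dvd pi n (x n.+1 - x n)) ->
    exists l : V, forall n, pi_dvd pi n (l - x n).

Definition complete_dvr (V : idomainType) (pi : V) : Prop :=
  dvr_uniformiser pi /\ pi_adically_complete pi.

Definition is_bornology (T : Type) (B : (T -> Prop) -> Prop) : Prop :=
  [/\ forall A, finite_subset A -> B A,
      forall A C, B A -> B C -> B (fun x => A x \/ C x) &
      forall A C, subset_of A C -> B C -> B A].

Section Modules.
Variables (V : idomainType) (M : lmodType V).

Definition is_submodule (T : M -> Prop) : Prop :=
  [/\ T 0, forall x y, T x -> T y -> T (x + y) & forall (a : V) x, T x -> T (a *: x)].

Definition bornological_module (B : (M -> Prop) -> Prop) : Prop :=
  is_bornology B /\
  forall S, B S -> exists T, [/\ B T, is_submodule T & subset_of S T].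

Definition pi_inv (pi : V) (S : M -> Prop) : M -> Prop := fun x => S (pi *: x).

Definition torsionfree (pi : V) (B : (M -> Prop) -> Prop) : Prop :=
  (forall (a : V) (x : M), a != 0 -> a *: x = 0 -> x = 0) /\
  (forall S, B S -> B (pi_inv pi S)).

Definition span_of (F : seq M) : M -> Prop :=
  fun x => exists a : 'I_(size F) -> V, x = \sum_(i < size F) a i *: F`_i.

Definition compactoid (pi : V) (B : (M -> Prop) -> Prop) (S : M -> Prop) : Prop :=
  exists T : M -> Prop, [/\ B T, is_submodule T, subset_of S T &
    forall n : nat, exists F : seq M,
      (forall f, List.In f F -> T f) /\
      subset_of S (fun x => exists v t, [/\ span_of F v, T t & x = v + pi ^+ n *: t])].

(* M' : the bornology of compactoid subsets *)
Definition compactoid_bornology (pi : V) (B : (M -> Prop) -> Prop) : (M -> Prop) -> Prop :=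
  compactoid pi B.

End Modules.

(* The key point is that pi^-1 (V F) is again finitely generated, by induction on F:
   the ideal of coefficients a for which a f + w (w in V F) is divisible by pi either
   contains a unit, and one new generator h with pi h = a f + w suffices, or it is
   (pi), and f itself can be added to the generators; absence of pi-torsion gives the
   base case pi^-1 0 = 0.  Hence if pi S lies in V F + pi^(n+1) T, then S lies in
   V G + pi^n (pi^-1 T) with V G = pi^-1 (V F) inside pi^-1 T, and pi^-1 T is bounded
   because M is torsionfree. *)
From Pilot Require Import Defs.
From mathcomp Require Import all_boot all_order all_algebra.
From Stdlib Require Import Classical.
Set Implicit Arguments. Unset Strict Implicit. Unset Printing Implicit Defensive.
Import GRing.Theory.
Local Open Scope ring_scope.

Lemma dvr_nonunit_dvd (V : idomainType) (pi a : V) :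
  dvr_uniformiser pi -> a \isn't a GRing.unit -> exists b, a = pi * b.
Proof.
case=> _ _ hfact ha; have [->|a0] := eqVneq a 0; first by exists 0; rewrite mulr0.
have [u [[|n] [hu ea]]] := hfact a a0; first by move: ha; rewrite ea mulr1 hu.
by exists (u * pi ^+ n); rewrite ea exprS mulrCA.
Qed.

Section Span.
Variables (V : idomainType) (M : lmodType V).

Lemma pi_inv_submodule (c : V) (T : M -> Prop) :
  is_submodule T -> is_submodule (Defs.pi_inv c T).
Proof.
case=> T0 TD TZ; split; rewrite /Defs.pi_inv.
- by rewrite scaler0.
- by move=> x y hx hy; rewrite scalerDr; apply: TD.
- by move=> a x hx; rewrite scalerA mulrC -scalerA; apply: TZ.
Qed.

Lemma span_of_submodule (F : seq M) : is_submodule (span_of F).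
Proof.
split.
- by exists (fun=> 0); rewrite big1 // => i _; rewrite scale0r.
- move=> _ _ [a ->] [b ->]; exists (fun i => a i + b i).
  by rewrite -big_split; apply: eq_bigr => i _; rewrite scalerDl.
- move=> c _ [a ->]; exists (fun i => c * a i).
  by rewrite scaler_sumr; apply: eq_bigr => i _; rewrite scalerA.
Qed.

Lemma span_of_nil (x : M) : span_of [::] x <-> x = 0.
Proof.
split; first by case=> a ->; rewrite big_ord0.
by move=> ->; exists (fun=> 0); rewrite big_ord0.
Qed.

Lemma span_of_cons (f : M) (F : seq M) (x : M) :
  span_of (f :: F) x <-> exists a y, span_of F y /\ x = a *: f + y.
Proof.
split.
  case=> a ->; rewrite big_ord_recl /=.
  by exists (a ord0), (\sum_(i < size F) a (lift ord0 i) *: F`_i); split => //; eexists.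
case=> a0 [_ [[b ->] ->]].
exists (fun i => if unlift ord0 i is Some j then b j else a0).
by rewrite big_ord_recl unlift_none; congr (_ + _); apply: eq_bigr => i _; rewrite liftK.
Qed.

Lemma span_of_min (F : seq M) (T : M -> Prop) : is_submodule T ->
  (forall f, List.In f F -> T f) -> subset_of (span_of F) T.
Proof.
case=> T0 TD TZ; elim: F => [|f F IH] hF x; first by move/span_of_nil ->.
case/span_of_cons=> a [y [hy ->]]; apply: TD; first by apply/TZ/hF; left.
by apply: IH hy => g hg; apply: hF; right.
Qed.

Lemma span_of_mem (F : seq M) (f : M) : List.In f F -> span_of F f.
Proof.
elim: F => [|g F IH] //= [<-|hf]; apply/span_of_cons.
  by exists 1, 0; split; [case: (span_of_submodule F) | rewrite scale1r addr0].
by exists 0, f; split; [exact: IH | rewrite scale0r add0r].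
Qed.

Lemma span_of_consB (f : M) (G : seq M) (a : V) (x : M) :
  span_of G (x - a *: f) -> span_of (f :: G) x.
Proof. by move=> hx; apply/span_of_cons; exists a, (x - a *: f); rewrite addrCA subrr addr0. Qed.

End Span.

Section PiInvSpan.
Variables (V : idomainType) (pi : V) (M : lmodType V).
Hypotheses (hpi : dvr_uniformiser pi) (no_pi_torsion : forall x : M, pi *: x = 0 -> x = 0).

Lemma pi_inv_span_of_fg (F : seq M) :
  exists G : seq M, forall x, Defs.pi_inv pi (span_of F) x <-> span_of G x.
Proof.
elim: F => [|f F [G0 IH]].
  exists [::] => x; rewrite /Defs.pi_inv !span_of_nil.
  by split=> [/no_pi_torsion|->]; rewrite ?scaler0.
pose P := Defs.pi_inv pi (span_of (f :: F)).
have P_sub : is_submodule P by apply/pi_inv_submodule/span_of_submodule.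
have G0_P g : List.In g G0 -> P g.
  move=> /(span_of_mem (M := M)) /IH hg; apply/span_of_cons.
  by exists 0, (pi *: g); rewrite scale0r add0r.
have P_cons z : P z -> exists a w, span_of F w /\ pi *: z = a *: f + w.
  by move/span_of_cons.
case: (classic (exists a w h, [/\ a \is a GRing.unit, span_of F w &
                                pi *: h = a *: f + w])).
  case=> a0 [w0 [h0 [ua0 hw0 eh0]]]; exists (h0 :: G0) => z; split.
    case/P_cons=> a [w [hw ez]]; pose l := a / a0.
    have ez' : pi *: (z - l *: h0) = w - l *: w0.
      rewrite scalerBr ez scalerA mulrC -scalerA eh0 scalerDr scalerA divrK //.
      by rewrite opprD addrACA subrr add0r.
    apply: (@span_of_consB _ _ _ _ l); apply/IH; rewrite /Defs.pi_inv ez'.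
    by case: (span_of_submodule F) => _ SD SZ; rewrite -scaleN1r scalerA; apply/SD/SZ.
  apply: span_of_min => // g [<-|]; last exact: G0_P.
  by rewrite /P /Defs.pi_inv eh0; apply/span_of_cons; exists a0, w0.
move=> no_unit; exists (f :: G0) => z; split.
  case/P_cons=> a [w [hw ez]].
  have [b eb] : exists b, a = pi * b.
    by apply: dvr_nonunit_dvd hpi _; apply/negP => ua; apply: no_unit; exists a, w, z.
  apply: (@span_of_consB _ _ _ _ b); apply/IH.
  by rewrite /Defs.pi_inv scalerBr ez scalerA -eb addrC addKr.
apply: span_of_min => // g [<-|]; last exact: G0_P.
by apply/span_of_cons; exists pi, 0; split; [case: (span_of_submodule F) | rewrite addr0].
Qed.

End PiInvSpan.

Section Compactoid.
Variables (V : idomainType) (pi : V) (M : lmodType V) (B : (M -> Prop) -> Prop).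
Hypotheses (hpi : dvr_uniformiser pi) (no_pi_torsion : forall x : M, pi *: x = 0 -> x = 0).
Hypothesis B_pi_inv : forall S, B S -> B (Defs.pi_inv pi S).

Lemma compactoid_pi_inv (S : M -> Prop) :
  compactoid pi B S -> compactoid pi B (Defs.pi_inv pi S).
Proof.
case=> T [BT subT hST happ]; exists (Defs.pi_inv pi T); split.
- exact: B_pi_inv.
- exact: pi_inv_submodule.
- by move=> x /hST.
move=> n; have [F [FT hSF]] := happ n.+1.
have [G hG] := pi_inv_span_of_fg hpi no_pi_torsion F.
exists G; split.
  by move=> g /(span_of_mem (M := M)) /hG; apply: span_of_min.
move=> x /hSF [v [t [hv ht ex]]]; exists (x - pi ^+ n *: t), t; split.
- by apply/hG; rewrite /Defs.pi_inv scalerBr ex scalerA -exprS addrK.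
- by case: subT => _ _ TZ; apply: TZ.
- by rewrite subrK.
Qed.

End Compactoid.

Theorem lemma4p2 (V : idomainType) (pi : V) (hV : complete_dvr pi)
  (M : lmodType V) (B : (M -> Prop) -> Prop)
  (hB : bornological_module B) (htf : torsionfree pi B) :
  torsionfree pi (compactoid_bornology pi B).
Proof.
have [hpi _] := hV; have [pi0 _ _] := hpi; have [no_torsion B_pi_inv] := htf.
split=> // S; apply: compactoid_pi_inv hpi _ B_pi_inv S => x; exact: no_torsion.
Qed.
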